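(* Let $G$ be a group of finite rank and $T$ a finite normal subgroup of $G$, and put $Q=G/T$. Then $\alpha_G^*=\alpha_Q^*$ for $*\in\{\leq,\lhd\}$, and $\zeta_{G,p}^*(s)=\zeta_{Q,p}^*(s)$ for every prime $p$ not dividing $|T|$.
   Context: $a_n^{\leq}(G)$ (resp. $a_n^{\lhd}(G)$) is the number of subgroups (resp. normal subgroups) of index $n$ in $G$; $\alpha_G^*:=\inf\{\alpha:\exists c>0\ \forall n\ \sum_{i\le n}a_i^*(G)\le cn^{\alpha}\}$; the local factor at a prime $p$ is $\zeta_{G,p}^*(s)=\sum_{k\ge0}a_{p^k}^*(G)p^{-ks}$. *)

From Stdlib Require Import Reals List Arith ZArith Znumtheory ClassicalEpsilon.
From Coquelicot Require Import Coquelicot.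

Record group := Group {
  carrier :> Type;
  gmul : carrier -> carrier -> carrier;
  gone : carrier;
  ginv : carrier -> carrier;
  gmulA : forall x y z, gmul x (gmul y z) = gmul (gmul x y) z;
  gmul1 : forall x, gmul gone x = x;
  gmulV : forall x, gmul (ginv x) x = gone
}.

Section GroupDefs.
Variable G : group.

Definition subgroup (H : G -> Prop) : Prop :=
  H (gone G) /\ (forall x y, H x -> H y -> H (gmul G x y)) /\
  (forall x, H x -> H (ginv G x)).

Definition normal_subgroup (H : G -> Prop) : Prop :=
  subgroup H /\ forall g x, H x -> H (gmul G (ginv G g) (gmul G x g)).

Definition has_index (H : G -> Prop) (n : nat) : Prop :=
  exists r : nat -> G,
    (forall x, exists i, (i < n)%nat /\ H (gmul G (ginv G (r i)) x)) /\
    (forall i j, (i < n)%nat -> (j < n)%nat ->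
       H (gmul G (ginv G (r i)) (r j)) -> i = j).

Definition generated (S : G -> Prop) (x : G) : Prop :=
  forall H, subgroup H -> (forall s, S s -> H s) -> H x.

Definition gen_by_list (H : G -> Prop) (l : list G) : Prop :=
  forall x, H x <-> generated (fun y => In y l) x.

Definition finitely_generated (H : G -> Prop) : Prop :=
  exists l, gen_by_list H l.

Definition finite_rank : Prop :=
  exists r : nat, forall H, subgroup H -> finitely_generated H ->
    exists l, (length l <= r)%nat /\ gen_by_list H l.

End GroupDefs.

Definition has_card {A : Type} (P : A -> Prop) (m : nat) : Prop :=
  exists l : list A, NoDup l /\ length l = m /\ (forall x, P x <-> In x l).

(** Number of elements of P (meaningful when P is finite). *)
Definition card_of {A : Type} (P : A -> Prop) : nat :=
  epsilon (inhabits 0%nat) (fun m => has_card P m).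

Inductive kind := Sub | Nor.

Definition subgroup_kind (k : kind) (G : group) (H : G -> Prop) : Prop :=
  match k with Sub => subgroup G H | Nor => normal_subgroup G H end.

Definition a_count (k : kind) (G : group) (n : nat) : nat :=
  card_of (fun H : G -> Prop => subgroup_kind k G H /\ has_index G H n).

Definition partial_count (k : kind) (G : group) (n : nat) : nat :=
  fold_right Nat.add 0%nat (map (a_count k G) (seq 1 n)).

Definition alpha (k : kind) (G : group) : Rbar :=
  Glb_Rbar (fun a : R => exists c : R, 0 < c /\
     forall n : nat, (1 <= n)%nat ->
       INR (partial_count k G n) <= c * Rpower (INR n) a).

(** Local factor zeta^*_{G,p}(s) = sum_k a^*_{p^k}(G) p^{-ks}, as a formal
    power series in p^{-s}, i.e. its coefficient sequence. *)
Definition local_zeta (k : kind) (G : group) (p : nat) : nat -> nat :=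
  fun e => a_count k G (p ^ e).

Definition group_hom (G Q : group) (f : G -> Q) : Prop :=
  forall x y, f (gmul G x y) = gmul Q (f x) (f y).

(* Subgroups of [Q] are the images of the subgroups of [G] containing [T], with the
   same index and normality, so [a_n(Q) <= a_n(G)].  Conversely [H |-> TH] sends a
   subgroup of index [n] to one of index at most [n] containing [T].  A subgroup [H]
   with [TH = K] has its cosets in [K] represented by the [|T|] elements of [T]; given
   a subgroup of [K] that separates any finite family of such [H] and is generated by
   at most [r] elements (finite rank), each [H] is determined by how these generators
   permute its cosets, so at most [2^((r+1)(|T|+1)^2)] subgroups share the same [TH].
   Hence the partial sums of [a_n(G)] and [a_n(Q)] agree up to a constant factor and
   [alpha_G = alpha_Q].  If [|G:H|] is a power of a prime not dividing [|T|], then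
   [|TH:H| = |T:T ∩ H|] divides both [|G:H|] and [|T|], so [T <= H]; thus the local
   factors at such a prime count the same subgroups. *)

From Stdlib Require Import Reals List Arith ZArith Znumtheory.
From Coquelicot Require Import Coquelicot.
From Stdlib Require Import Lia ClassicalEpsilon FunctionalExtensionality PropExtensionality Classical.

Set Bullet Behavior "Strict Subproofs".

Lemma pred_ext {A : Type} (P Q : A -> Prop) : (forall x, P x <-> Q x) -> P = Q.
Proof.
  intro h. apply functional_extensionality; intro x. now apply propositional_extensionality.
Qed.

Lemma NoDup_list_prod {A B : Type} (l : list A) (l' : list B) :
  NoDup l -> NoDup l' -> NoDup (list_prod l l').
Proof.
  induction l as [|a l IH]; intros hl hl'; [constructor|].
  inversion_clear hl as [|? ? ha hl0]. simpl. apply NoDup_app; auto.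
  - apply NoDup_map_NoDup_ForallPairs; auto. now intros x y _ _ [= ->].
  - intros [x y] hx hy. apply in_map_iff in hx as [z [[= <- _] _]].
    now apply in_prod_iff in hy as [? _].
Qed.

Fixpoint bool_lists (n : nat) : list (list bool) :=
  match n with
  | O => nil :: nil
  | S n => map (cons true) (bool_lists n) ++ map (cons false) (bool_lists n)
  end.

Lemma bool_lists_complete n l : length l = n -> In l (bool_lists n).
Proof.
  revert l; induction n as [|n IH]; intros [|b l] hl; try discriminate; [now left|].
  simpl; apply in_or_app. destruct b; [left|right]; apply in_map, IH; auto.
Qed.

Lemma NoDup_bool_lists_length n (L : list (list bool)) :
  NoDup L -> (forall l, In l L -> length l = n) -> (length L <= 2 ^ n)%nat.
Proof.
  intros hnd hlen. replace (2 ^ n)%nat with (length (bool_lists n)).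
  - apply NoDup_incl_length; auto. intros l hl; now apply bool_lists_complete, hlen.
  - clear hlen. induction n as [|n IH]; auto. simpl. rewrite length_app, !length_map. lia.
Qed.

Lemma has_card_unique {A : Type} (P : A -> Prop) m m' :
  has_card P m -> has_card P m' -> m = m'.
Proof.
  intros [l [hl [<- hP]]] [l' [hl' [<- hP']]].
  apply Nat.le_antisymm; apply NoDup_incl_length; auto; intros x hx.
  - now apply hP', hP.
  - now apply hP, hP'.
Qed.

Lemma card_of_has_card {A : Type} (P : A -> Prop) m : has_card P m -> card_of P = m.
Proof.
  intro h. apply (has_card_unique P); auto.
  unfold card_of. apply epsilon_spec. eauto.
Qed.

Lemma has_card_le_inj {A B : Type} (P : A -> Prop) (P' : B -> Prop) (f : A -> B) m m' :
  has_card P m -> has_card P' m' -> (forall x, P x -> P' (f x)) ->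
  (forall x y, P x -> P y -> f x = f y -> x = y) -> (m <= m')%nat.
Proof.
  intros [l [hl [<- hP]]] [l' [hl' [<- hP']]] hf hinj.
  rewrite <- (length_map f l). apply NoDup_incl_length.
  - apply NoDup_map_NoDup_ForallPairs; auto. intros x y hx hy; apply hinj; now apply hP.
  - intros y hy. apply in_map_iff in hy as [x [<- hx]]. now apply hP', hf, hP.
Qed.

Definition at_most {A : Type} (P : A -> Prop) (b : nat) : Prop :=
  forall l, NoDup l -> (forall x, In x l -> P x) -> (length l <= b)%nat.

Lemma at_most_has_card {A : Type} (P : A -> Prop) b : at_most P b -> exists m, has_card P m.
Proof.
  intro hb.
  enough (H : forall k l, NoDup l -> (forall x, In x l -> P x) -> (b - length l <= k)%nat ->
                exists m, has_card P m) by (apply (H b nil); simpl; auto using NoDup_nil; lia).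
  induction k as [|k IH]; intros l hnd hl hk;
    (destruct (classic (forall x, P x -> In x l)) as [hall|[x hx]%not_all_ex_not];
     [exists (length l), l; repeat split; auto|apply imply_to_and in hx as [hPx hx]]).
  - assert (length (x :: l) <= b)%nat by (apply hb; [now constructor|intros y [<-|hy]; auto]).
    simpl in *; lia.
  - apply (IH (x :: l)); [now constructor|intros y [<-|hy]; auto|simpl; lia].
Qed.

Lemma at_most_inj {A B : Type} (P : A -> Prop) (P' : B -> Prop) (f : A -> B) b :
  at_most P' b -> (forall x, P x -> P' (f x)) ->
  (forall x y, P x -> P y -> f x = f y -> x = y) -> at_most P b.
Proof.
  intros hb hf hinj l hnd hl. rewrite <- (length_map f). apply hb.
  - apply NoDup_map_NoDup_ForallPairs; auto. intros x y hx hy; apply hinj; auto.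
  - intros y hy. apply in_map_iff in hy as [x [<- hx]]; auto.
Qed.

Lemma has_card_at_most {A : Type} (P : A -> Prop) t : has_card P t -> at_most P t.
Proof.
  intros [l [hl [<- hP]]] l' hl' hsub. apply NoDup_incl_length; auto.
  intros x hx. now apply hP, hsub.
Qed.

Lemma has_card_subset {A : Type} (P P' : A -> Prop) t :
  has_card P' t -> (forall x, P x -> P' x) -> exists m, has_card P m.
Proof.
  intros hcard hsub. apply (at_most_has_card P t).
  apply (at_most_inj P P' (fun x => x)); auto. now apply has_card_at_most.
Qed.

Lemma length_le_fibers {A B : Type} (f : A -> B) (L : list A) (M : list B) (b : nat) :
  NoDup L -> (forall x, In x L -> In (f x) M) ->
  (forall y, at_most (fun x => In x L /\ f x = y) b) ->
  (length L <= b * length M)%nat.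
Proof.
  revert L. induction M as [|y M IH]; intros L hnd hin hfib.
  - destruct L as [|x L]; [simpl; lia|]. destruct (hin x (or_introl eq_refl)).
  - set (over_y := fun x => if excluded_middle_informative (f x = y) then true else false).
    rewrite <- (filter_length over_y L).
    assert (length (filter over_y L) <= b)%nat.
    { apply (hfib y); [now apply NoDup_filter|].
      intros x hx. apply filter_In in hx as [hx hy]. unfold over_y in hy.
      destruct excluded_middle_informative; easy. }
    assert (length (filter (fun x => negb (over_y x)) L) <= b * length M)%nat.
    { apply IH; [now apply NoDup_filter| |].
      - intros x hx. apply filter_In in hx as [hx hy]. unfold over_y in hy.
        destruct excluded_middle_informative; [easy|].
        destruct (hin x hx); [congruence|easy].
      - intros y' l hl hsub. apply (hfib y'); auto. intros x hx.
        destruct (hsub x hx) as [hxL hfx]. now apply filter_In in hxL as [? _]. }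
    simpl; lia.
Qed.

Lemma has_card_disjoint_union {A : Type} (P : nat -> A -> Prop) (a : nat -> nat) (I : list nat) :
  NoDup I -> (forall i, In i I -> has_card (P i) (a i)) ->
  (forall i j x, In i I -> In j I -> P i x -> P j x -> i = j) ->
  has_card (fun x => exists i, In i I /\ P i x) (fold_right Nat.add 0%nat (map a I)).
Proof.
  induction I as [|i I IH]; intros hnd hcard hdisj.
  - exists nil. split; [constructor|split; [reflexivity|]]. now intros x; split; [intros [? [[] _]]|].
  - inversion_clear hnd as [|? ? hi hnd'].
    destruct IH as [L [hL [hlen hiff]]]; auto.
    { intros j hj; apply hcard; now right. }
    { intros j j' x hj hj'; apply hdisj; now right. }
    destruct (hcard i (or_introl eq_refl)) as [l [hl [hlen' hiff']]].
    exists (l ++ L). split; [|split].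
    + apply NoDup_app; auto. intros x hx hx'.
      apply hiff in hx' as [j [hj hjx]]. apply hiff' in hx.
      assert (i = j) as <- by (apply (hdisj i j x); simpl; auto). contradiction.
    + rewrite length_app; simpl; lia.
    + intro x. rewrite in_app_iff. split.
      * intros [j [[<-|hj] hx]]; [left; now apply hiff'|right; apply hiff; eauto].
      * intros [hx|hx].
        -- exists i; split; [now left|now apply hiff'].
        -- apply hiff in hx as [j [hj hx]]. exists j; split; [now right|auto].
Qed.

Lemma prime_power_coprime (p t d e : nat) : prime (Z.of_nat p) -> ~ Nat.divide p t ->
  Nat.divide d (p ^ e) -> Nat.divide d t -> d = 1%nat.
Proof.
  intros hp hpt hde hdt.
  assert (Zdiv : forall a b, Nat.divide a b -> (Z.of_nat a | Z.of_nat b)%Z).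
  { intros a b [c ->]. exists (Z.of_nat c). now rewrite Nat2Z.inj_mul. }
  assert (hrel : rel_prime (Z.of_nat t) (Z.of_nat p)).
  { apply rel_prime_sym, prime_rel_prime; auto. intros [c hc]. apply hpt.
    exists (Z.to_nat c). pose proof (prime_ge_2 _ hp). apply Nat2Z.inj.
    rewrite Nat2Z.inj_mul, Z2Nat.id; [lia|]. nia. }
  assert (hrele : rel_prime (Z.of_nat t) (Z.of_nat (p ^ e))).
  { clear hde. induction e as [|e IH]; [apply rel_prime_sym, rel_prime_1|].
    rewrite Nat.pow_succ_r', Nat2Z.inj_mul. now apply rel_prime_mult. }
  destruct hrele as [_ _ hgcd].
  specialize (hgcd _ (Zdiv _ _ hdt) (Zdiv _ _ hde)). apply Z.divide_1_r in hgcd. lia.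
Qed.

Declare Scope group_scope.
Local Infix "**" := (gmul _) (at level 40, left associativity) : group_scope.
Local Notation "x ^-1" := (ginv _ x) (at level 3, format "x ^-1") : group_scope.
Local Notation one := (gone _).
Local Open Scope group_scope.

Section GroupTheory.
Variable G : group.
Implicit Types x y : G.

Lemma mulKg x y : x^-1 ** (x ** y) = y.
Proof. now rewrite gmulA, gmulV, gmul1. Qed.

Lemma mulgV x : x ** x^-1 = one.
Proof.
  transitivity ((x^-1)^-1 ** x^-1 ** (x ** x^-1)).
  - now rewrite (gmulV _ (x^-1)), gmul1.
  - now rewrite <- gmulA, (mulKg x), gmulV.
Qed.

Lemma mulg1 x : x ** one = x.
Proof. now rewrite <- (gmulV _ x), gmulA, mulgV, gmul1. Qed.

Lemma mulKVg x y : x ** (x^-1 ** y) = y.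
Proof. now rewrite gmulA, mulgV, gmul1. Qed.

Lemma invg_unique x y : x ** y = one -> x = y^-1.
Proof. intro h. now rewrite <- (mulg1 x), <- (mulgV y), gmulA, h, gmul1. Qed.

Lemma invgK x : (x^-1)^-1 = x.
Proof. symmetry; apply invg_unique, mulgV. Qed.

Lemma invMg x y : (x ** y)^-1 = y^-1 ** x^-1.
Proof.
  symmetry; apply invg_unique.
  now rewrite <- gmulA, mulKg, gmulV.
Qed.

Lemma invg1 : (gone G)^-1 = one.
Proof. symmetry; apply invg_unique, gmul1. Qed.

End GroupTheory.

Global Hint Rewrite <- gmulA : group_simpl.
Global Hint Rewrite invMg invgK invg1 : group_simpl.
Global Hint Rewrite gmulV mulgV mulKg mulKVg gmul1 mulg1 : group_simpl.
Tactic Notation "gsimpl" := autorewrite with group_simpl.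
Tactic Notation "gsimpl" "in" hyp(h) := autorewrite with group_simpl in h.

Section Subgroups.
Variable G : group.
Implicit Types (x y a b : G) (H K L : G -> Prop).

Lemma subgroup1 H : subgroup G H -> H one.
Proof. now intros [h _]. Qed.

Lemma subgroupM H x y : subgroup G H -> H x -> H y -> H (x ** y).
Proof. intros [_ [h _]]; auto. Qed.

Lemma subgroupV H x : subgroup G H -> H x -> H x^-1.
Proof. intros [_ [_ h]]; auto. Qed.

Lemma subgroupVr H x : subgroup G H -> H x^-1 -> H x.
Proof. intros hH h. rewrite <- invgK. now apply subgroupV. Qed.

Lemma subgroupT : subgroup G (fun _ => True).
Proof. now split. Qed.

Lemma subgroup_trivial : subgroup G (fun x => x = one).
Proof. split; [|split]; intros; subst; now gsimpl. Qed.

Lemma subgroupI H K : subgroup G H -> subgroup G K -> subgroup G (fun x => H x /\ K x).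
Proof.
  intros hH hK; split; [|split].
  - split; now apply subgroup1.
  - intros x y [] []; split; now apply subgroupM.
  - intros x []; split; now apply subgroupV.
Qed.

Lemma subgroup_kind_subgroup k H : subgroup_kind k G H -> subgroup G H.
Proof. destruct k; [easy|now intros [h _]]. Qed.

Definition covers L H (R : list G) : Prop :=
  forall x, L x -> exists a, In a R /\ H (a^-1 ** x).

Definition separated H (R : list G) : Prop :=
  forall a b, In a R -> In b R -> H (a^-1 ** b) -> a = b.

Record transversal L H (R : list G) : Prop := {
  transversal_NoDup : NoDup R;
  transversal_sub : forall a, In a R -> L a;
  transversal_covers : covers L H R;
  transversal_separated : separated H R
}.

Definition rel_index L H (n : nat) : Prop :=
  exists R, transversal L H R /\ length R = n.

Lemma has_index_rel_index H n :
  subgroup G H -> has_index G H n <-> rel_index (fun _ => True) H n.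
Proof.
  intro hH; split.
  - intros [r [hcov hsep]]. exists (map r (seq 0 n)).
    split; [|now rewrite length_map, length_seq].
    split.
    + apply NoDup_map_NoDup_ForallPairs; [|apply seq_NoDup].
      intros i j hi hj hr. apply in_seq in hi, hj.
      apply hsep; try lia. rewrite hr; gsimpl. now apply subgroup1.
    + easy.
    + intros x _. destruct (hcov x) as [i [hi hx]].
      exists (r i); split; [apply in_map, in_seq; lia|easy].
    + intros a b ha hb hab. apply in_map_iff in ha as [i [<- hi]].
      apply in_map_iff in hb as [j [<- hj]]. apply in_seq in hi, hj.
      f_equal. apply hsep; auto; lia.
  - intros [R [[hnd _ hcov hsep] <-]]. exists (fun i => nth i R one). split.
    + intro x. destruct (hcov x I) as [a [ha hx]].
      destruct (In_nth R a one ha) as [i [hi <-]]. now exists i.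
    + intros i j hi hj hij. apply (proj1 (NoDup_nth R one) hnd); auto.
      apply hsep; auto; now apply nth_In.
Qed.

Lemma covers_trans L H R R' :
  subgroup G H -> covers L H R -> covers (fun x => In x R) H R' -> covers L H R'.
Proof.
  intros hH hR hR' x hx. destruct (hR x hx) as [a [ha hax]].
  destruct (hR' a ha) as [b [hb hba]]. exists b; split; auto.
  replace (b^-1 ** x) with ((b^-1 ** a) ** (a^-1 ** x)) by now gsimpl.
  now apply subgroupM.
Qed.

Lemma separated_subcover H R : subgroup G H ->
  exists R', incl R' R /\ NoDup R' /\ separated H R' /\ covers (fun x => In x R) H R'.
Proof.
  intro hH. induction R as [|a R [R' [hincl [hnd [hsep hcov]]]]].
  - exists nil. split; [apply incl_nil_l|split; [apply NoDup_nil|split]].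
    + now intros ? ? [].
    + now intros ? [].
  - destruct (classic (exists b, In b R' /\ H (b^-1 ** a))) as [hin|hout].
    + exists R'. split; [|split; [|split]]; auto.
      * intros x hx; right; auto.
      * intros x [<-|hx]; auto.
    + exists (a :: R'). split; [|split; [|split]].
      * intros x [<-|hx]; [left|right]; auto.
      * apply NoDup_cons; [|exact hnd]. intro ha. apply hout. exists a; split; auto.
        gsimpl; now apply subgroup1.
      * assert (hsym : forall b, In b R' -> ~ H (a^-1 ** b)).
        { intros b hb hab. apply hout. exists b; split; auto.
          replace (b^-1 ** a) with ((a^-1 ** b)^-1) by now gsimpl.
          now apply subgroupV. }
        intros x y [<-|hx] [<-|hy] hxy; auto.
        -- now destruct (hsym y hy).
        -- exfalso; apply hout; eauto.
      * intros x [<-|hx].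
        -- exists a; split; [now left|]. gsimpl; now apply subgroup1.
        -- destruct (hcov x hx) as [b [hb hbx]]. exists b; split; [now right|auto].
Qed.

Lemma transversal_of_covers L H R : subgroup G H ->
  covers L H R -> (forall a, In a R -> L a) ->
  exists R', transversal L H R' /\ incl R' R.
Proof.
  intros hH hcov hsub. destruct (separated_subcover H R hH) as [R' [hincl [hnd [hsep hcov']]]].
  exists R'; split; auto. split; auto.
  eapply covers_trans; eauto.
Qed.

Lemma transversal_length_le L H R1 R2 : subgroup G H ->
  transversal L H R1 -> transversal L H R2 -> (length R1 <= length R2)%nat.
Proof.
  intros hH [hnd1 hsub1 _ hsep1] [_ _ hcov2 _].
  set (rep := fun a => epsilon (inhabits one) (fun b => In b R2 /\ H (b^-1 ** a))).
  assert (hrep : forall a, In a R1 -> In (rep a) R2 /\ H ((rep a)^-1 ** a)).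
  { intros a ha. apply epsilon_spec, hcov2, hsub1, ha. }
  rewrite <- (length_map rep R1). apply NoDup_incl_length.
  - apply NoDup_map_NoDup_ForallPairs; auto. intros a b ha hb hab.
    apply hsep1; auto. destruct (hrep a ha) as [_ h1], (hrep b hb) as [_ h2].
    rewrite hab in h1.
    replace (a^-1 ** b) with (((rep b)^-1 ** a)^-1 ** ((rep b)^-1 ** b)) by now gsimpl.
    apply subgroupM; auto. now apply subgroupV.
  - intros b hb. apply in_map_iff in hb as [a [<- ha]]. now apply hrep.
Qed.

Lemma rel_index_unique L H m n : subgroup G H ->
  rel_index L H m -> rel_index L H n -> m = n.
Proof.
  intros hH [R1 [h1 <-]] [R2 [h2 <-]].
  apply Nat.le_antisymm; eapply transversal_length_le; eauto.
Qed.

Lemma rel_index_of_covers L H R : subgroup G H ->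
  covers L H R -> (forall a, In a R -> L a) ->
  exists m, (m <= length R)%nat /\ rel_index L H m.
Proof.
  intros hH hcov hsub. destruct (transversal_of_covers L H R hH hcov hsub) as [R' [hR' hincl]].
  exists (length R'); split; [|now exists R'].
  apply NoDup_incl_length; auto. apply hR'.
Qed.

Lemma transversal_mul L K H S U :
  subgroup G L -> subgroup G K -> subgroup G H ->
  (forall x, H x -> K x) -> (forall x, K x -> L x) ->
  transversal L K S -> transversal K H U ->
  transversal L H (map (fun p => fst p ** snd p) (list_prod S U)).
Proof.
  intros hL hK hH hHK hKL [hndS hsubS hcovS hsepS] [hndU hsubU hcovU hsepU].
  assert (key : forall s u s' u', In s S -> In u U -> In s' S -> In u' U ->
     H ((s ** u)^-1 ** (s' ** u')) -> s = s' /\ u = u').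
  { intros s u s' u' hs hu hs' hu' h.
    assert (s = s') as <-.
    { apply hsepS; auto.
      replace (s^-1 ** s') with (u ** ((s ** u)^-1 ** (s' ** u')) ** u'^-1) by now gsimpl.
      apply subgroupM; [auto| |apply subgroupV; auto]. apply subgroupM; auto. }
    split; auto. apply hsepU; auto. now gsimpl in h. }
  split.
  - apply NoDup_map_NoDup_ForallPairs.
    + intros [s u] [s' u'] h1 h2 he. simpl in he.
      apply in_prod_iff in h1 as [hs hu], h2 as [hs' hu'].
      destruct (key s u s' u') as [-> ->]; auto.
      rewrite he; gsimpl. now apply subgroup1.
    + apply NoDup_list_prod; auto.
  - intros a ha. apply in_map_iff in ha as [[s u] [<- hp]].
    apply in_prod_iff in hp as [hs hu]. apply subgroupM; auto.
  - intros x hx. destruct (hcovS x hx) as [s [hs hsx]]. destruct (hcovU _ hsx) as [u [hu hux]].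
    exists (s ** u); split.
    + apply in_map_iff. exists (s, u); split; auto. now apply in_prod_iff.
    + now gsimpl.
  - intros a b ha hb hab. apply in_map_iff in ha as [[s u] [<- hp]], hb as [[s' u'] [<- hp']].
    apply in_prod_iff in hp as [hs hu], hp' as [hs' hu'].
    destruct (key s u s' u') as [-> ->]; auto.
Qed.

Lemma rel_index_mul L K H m n :
  subgroup G L -> subgroup G K -> subgroup G H ->
  (forall x, H x -> K x) -> (forall x, K x -> L x) ->
  rel_index L K m -> rel_index K H n -> rel_index L H (m * n).
Proof.
  intros hL hK hH hHK hKL [S [hS <-]] [U [hU <-]].
  eexists; split; [now apply (transversal_mul L K H S U)|].
  now rewrite length_map, length_prod.
Qed.

Lemma rel_index_trivial L t : has_card L t -> rel_index L (fun x => x = one) t.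
Proof.
  intros [l [hl [<- hL]]]. exists l; split; auto. split; auto.
  - intros a ha; now apply hL.
  - intros x hx. exists x; split; [now apply hL|now gsimpl].
  - intros a b _ _ hab. now rewrite <- (mulKVg _ a b), hab, mulg1.
Qed.

Lemma rel_index1_incl L H : subgroup G L -> subgroup G H ->
  rel_index L H 1 -> forall x, L x -> H x.
Proof.
  intros hL hH [[|u [|? ?]] [[_ _ hcov _] hlen]]; try discriminate.
  assert (hu : H u).
  { destruct (hcov one (subgroup1 L hL)) as [a [[<-|[]] ha]].
    apply subgroupVr; auto. now gsimpl in ha. }
  intros x hx. destruct (hcov x hx) as [a [[<-|[]] ha]].
  replace x with (u ** (u^-1 ** x)) by now gsimpl. now apply subgroupM.
Qed.

Lemma has_index_unique H m n :
  subgroup G H -> has_index G H m -> has_index G H n -> m = n.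
Proof.
  intros hH hm hn. apply has_index_rel_index in hm, hn; auto.
  now apply (rel_index_unique (fun _ => True) H).
Qed.

Lemma generated_incl (S : G -> Prop) H :
  subgroup G H -> (forall s, S s -> H s) -> forall x, generated G S x -> H x.
Proof. intros hH hS x hx. now apply hx. Qed.

Lemma generated_subgroup (S : G -> Prop) : subgroup G (generated G S).
Proof.
  split; [|split].
  - intros H hH _. now apply subgroup1.
  - intros x y hx hy H hH hS. apply subgroupM; [exact hH|apply hx|apply hy]; auto.
  - intros x hx H hH hS. apply subgroupV; [exact hH|apply hx]; auto.
Qed.

Lemma generated_base (S : G -> Prop) s : S s -> generated G S s.
Proof. intros hs H _ hS. auto. Qed.

End Subgroups.

Section CosetSignature.
Variable G : group.
Implicit Types (f g x : G) (H K : G -> Prop).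

(* [g] maps the coset [r_j H] to [r_i H], where [r_0 = one] and [r_(i+1)] is the
   [i]-th element of [R]; the extra representative [r_0] makes the [(0, 0)] entry
   of [g] equivalent to [H g]. *)
Definition coset_entry H (R : list G) g (i j : nat) : Prop :=
  H ((nth i (one :: R) one)^-1 ** (g ** nth j (one :: R) one)).

Definition covered_by K H (R : list G) (t : nat) : Prop :=
  subgroup G H /\ (forall x, H x -> K x) /\ covers G K H R /\
  (forall a, In a R -> K a) /\ length R = t.

Lemma coset_entry_00 H R g : coset_entry H R g 0 0 <-> H g.
Proof. unfold coset_entry; simpl. now gsimpl. Qed.

Lemma coset_entry_inv H R g i j : subgroup G H ->
  coset_entry H R g^-1 i j <-> coset_entry H R g j i.
Proof.
  intro hH; unfold coset_entry; split; intro h; apply subgroupV in h; auto; now gsimpl in h.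
Qed.

Lemma coset_entry_mul K H R t f g i j : subgroup G K -> covered_by K H R t -> K f -> K g ->
  coset_entry H R (f ** g) i j <->
  exists k, (k < S t)%nat /\ coset_entry H R f i k /\ coset_entry H R g k j.
Proof.
  intros hK [hH [_ [hcov [hR <-]]]] hf hg. unfold coset_entry.
  set (ri := nth i (one :: R) one); set (rj := nth j (one :: R) one).
  split.
  - intro h.
    assert (hrj : K rj).
    { unfold rj. destruct j as [|j]; simpl; [now apply subgroup1|].
      destruct (nth_in_or_default j R one) as [hin| ->]; [now apply hR|now apply subgroup1]. }
    destruct (hcov (g ** rj)) as [a [ha hax]]; [now apply subgroupM|].
    destruct (In_nth R a one ha) as [k [hk <-]].
    exists (S k); split; [simpl; lia|]. split; [|exact hax].
    simpl. replace (ri^-1 ** (f ** nth k R one)) with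
      ((ri^-1 ** (f ** g ** rj)) ** ((nth k R one)^-1 ** (g ** rj))^-1) by now gsimpl.
    apply subgroupM; auto. now apply subgroupV.
  - intros [k [_ [h1 h2]]]. pose proof (subgroupM G H _ _ hH h1 h2) as h.
    gsimpl; now gsimpl in h.
Qed.

Lemma coset_entries_determine K H1 R1 H2 R2 t (gens : list G) :
  subgroup G K -> covered_by K H1 R1 t -> covered_by K H2 R2 t ->
  (forall g, In g gens -> K g) ->
  (forall g i j, In g (one :: gens) -> (i < S t)%nat -> (j < S t)%nat ->
     coset_entry H1 R1 g i j <-> coset_entry H2 R2 g i j) ->
  forall f, generated G (fun y => In y gens) f -> (H1 f <-> H2 f).
Proof.
  intros hK hc1 hc2 hgK hgens f hf.
  set (S := fun f => K f /\ forall i j, (i < S t)%nat -> (j < S t)%nat ->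
                     (coset_entry H1 R1 f i j <-> coset_entry H2 R2 f i j)).
  assert (hS : subgroup G S).
  { split; [|split].
    - split; [now apply subgroup1|]. intros; apply hgens; auto. now left.
    - intros x y [hx hxe] [hy hye]. split; [now apply subgroupM|]. intros i j hi hj.
      rewrite (coset_entry_mul K H1 R1 t), (coset_entry_mul K H2 R2 t); auto.
      split; intros [k [hk [hik hkj]]]; exists k; split; auto;
        split; [apply hxe| apply hye| apply hxe| apply hye]; auto.
    - intros x [hx hxe]. split; [now apply subgroupV|]. intros i j hi hj.
      rewrite !coset_entry_inv; [|apply hc2|apply hc1]. now apply hxe. }
  assert (hSf : S f).
  { apply hf; auto. intros g hg. split; auto. intros; apply hgens; auto. now right. }
  destruct hSf as [_ hSf]. specialize (hSf 0%nat 0%nat ltac:(lia) ltac:(lia)).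
  now rewrite !coset_entry_00 in hSf.
Qed.

Definition coset_signature (gens : list G) (t : nat) H (R : list G) : list bool :=
  map (fun p => if excluded_middle_informative
                     (coset_entry H R (fst p) (fst (snd p)) (snd (snd p)))
                then true else false)
      (list_prod (one :: gens) (list_prod (seq 0 (S t)) (seq 0 (S t)))).

Lemma length_coset_signature gens t H R :
  length (coset_signature gens t H R) = (S (length gens) * (S t * S t))%nat.
Proof. unfold coset_signature. now rewrite length_map, !length_prod, !length_seq. Qed.

Lemma coset_signature_entries gens t H1 R1 H2 R2 :
  coset_signature gens t H1 R1 = coset_signature gens t H2 R2 ->
  forall g i j, In g (one :: gens) -> (i < S t)%nat -> (j < S t)%nat ->
  coset_entry H1 R1 g i j <-> coset_entry H2 R2 g i j.
Proof.
  intros hsig g i j hg hi hj.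
  assert (hin : In (g, (i, j)) (list_prod (one :: gens) (list_prod (seq 0 (S t)) (seq 0 (S t))))).
  { apply in_prod; [exact hg|]. apply in_prod; apply in_seq; lia. }
  apply map_ext_in_iff with (a := (g, (i, j))) in hsig; [|exact hin]. simpl in hsig.
  do 2 destruct excluded_middle_informative; easy.
Qed.

End CosetSignature.

Section BoundedRank.
Variables (G : group) (r : nat).
Hypothesis hrank : forall H, subgroup G H -> finitely_generated G H ->
  exists l, (length l <= r)%nat /\ gen_by_list G H l.
Variable K : G -> Prop.
Hypothesis hK : subgroup G K.

Definition separating_element (H1 H2 : G -> Prop) : G :=
  epsilon (inhabits one) (fun x => K x /\ (H1 <> H2 -> ~ (H1 x <-> H2 x))).

Lemma separating_element_spec H1 H2 :
  (forall x, H1 x -> K x) -> (forall x, H2 x -> K x) ->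
  K (separating_element H1 H2) /\
  (H1 <> H2 -> ~ (H1 (separating_element H1 H2) <-> H2 (separating_element H1 H2))).
Proof.
  intros h1 h2. unfold separating_element. apply epsilon_spec.
  destruct (classic (H1 = H2)) as [heq|hne].
  - exists one. split; [now apply subgroup1|contradiction].
  - assert (hx : exists x, ~ (H1 x <-> H2 x)).
    { apply NNPP. intro hall. apply hne, pred_ext. intro x.
      apply NNPP. intro hx. apply hall. now exists x. }
    destruct hx as [x hx]. exists x. split; [|easy].
    destruct (classic (H1 x)); [auto|]. destruct (classic (H2 x)); [auto|tauto].
Qed.

Lemma separating_generators (l : list (G -> Prop)) :
  (forall H, In H l -> forall x, H x -> K x) ->
  exists gens, (length gens <= r)%nat /\ (forall g, In g gens -> K g) /\
    forall H1 H2, In H1 l -> In H2 l -> H1 <> H2 ->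
    exists x, generated G (fun y => In y gens) x /\ ~ (H1 x <-> H2 x).
Proof.
  intro hl.
  set (D := map (fun p => separating_element (fst p) (snd p)) (list_prod l l)).
  assert (hDK : forall y, In y D -> K y).
  { intros y hy. apply in_map_iff in hy as [[H1 H2] [<- hp]].
    apply in_prod_iff in hp as [h1 h2]. now apply separating_element_spec; apply hl. }
  destruct (hrank (generated G (fun y => In y D))) as [gens [hlen hgens]].
  { apply generated_subgroup. }
  { now exists D. }
  exists gens; split; [|split]; auto.
  - intros g hg. apply (generated_incl G (fun y => In y D)); auto.
    apply (proj2 (hgens g)), generated_base, hg.
  - intros H1 H2 h1 h2 hne. exists (separating_element H1 H2). split.
    + apply (proj1 (hgens _)), generated_base, in_map_iff. exists (H1, H2); split; auto.
      now apply in_prod.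
    + now apply separating_element_spec; try apply hl.
Qed.

Theorem covered_subgroups_at_most t :
  at_most (fun H => exists R, covered_by G K H R t) (2 ^ (S r * (S t * S t))).
Proof.
  intros l hnd hl.
  set (rho := fun H => epsilon (inhabits nil) (fun R => covered_by G K H R t)).
  assert (hrho : forall H, In H l -> covered_by G K H (rho H) t).
  { intros H hH. apply epsilon_spec, hl, hH. }
  destruct (separating_generators l) as [gens [hlen [hgK hsep]]].
  { intros H hH. apply hrho, hH. }
  set (sig := fun H => coset_signature G gens t H (rho H)).
  assert (hinj : forall H1 H2, In H1 l -> In H2 l -> sig H1 = sig H2 -> H1 = H2).
  { intros H1 H2 h1 h2 hsig. apply NNPP; intro hne.
    destruct (hsep H1 H2 h1 h2 hne) as [x [hx hdiff]]. apply hdiff.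
    apply (coset_entries_determine G K H1 (rho H1) H2 (rho H2) t gens); auto.
    now apply coset_signature_entries. }
  rewrite <- (length_map sig l). eapply Nat.le_trans.
  - apply (NoDup_bool_lists_length (S (length gens) * (S t * S t))).
    + apply NoDup_map_NoDup_ForallPairs; auto.
    + intros s hs. apply in_map_iff in hs as [H [<- _]]. apply length_coset_signature.
  - apply Nat.pow_le_mono_r; [lia|]. apply Nat.mul_le_mono_r. lia.
Qed.

End BoundedRank.

Section Correspondence.
Variables (G Q : group) (pi : G -> Q) (T : G -> Prop).
Hypotheses (hpi : group_hom G Q pi) (hsurj : forall q, exists g, pi g = q)
  (hker : forall g, pi g = one <-> T g).
Implicit Types (K : G -> Prop) (L : Q -> Prop).

Lemma group_hom1 : pi one = one.
Proof.
  rewrite <- (mulKg _ (pi one) (pi one)), <- hpi, gmul1. apply gmulV.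
Qed.

Lemma group_homV x : pi x^-1 = (pi x)^-1.
Proof. apply invg_unique. now rewrite <- hpi, gmulV, group_hom1. Qed.

Local Ltac push_hom := repeat rewrite ?hpi, ?group_homV, ?group_hom1.

Definition preimage L : G -> Prop := fun g => L (pi g).
Definition image K : Q -> Prop := fun q => exists g, K g /\ pi g = q.

Definition lift (q : Q) : G := epsilon (inhabits one) (fun g => pi g = q).

Lemma liftK q : pi (lift q) = q.
Proof. apply (epsilon_spec (inhabits one) (fun g => pi g = q)), hsurj. Qed.

Lemma preimage_kind k L : subgroup_kind k Q L -> subgroup_kind k G (preimage L).
Proof.
  assert (hsub : subgroup Q L -> subgroup G (preimage L)).
  { intro hL; unfold preimage; split; [|split]; intros; push_hom.
    - now apply subgroup1.
    - now apply subgroupM.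
    - now apply subgroupV. }
  destruct k; simpl; auto. intros [hL hn]; split; auto.
  intros g x hx; unfold preimage in *. push_hom. now apply hn.
Qed.

Lemma image_kind k K : subgroup_kind k G K -> subgroup_kind k Q (image K).
Proof.
  assert (hsub : subgroup G K -> subgroup Q (image K)).
  { intros hK; unfold image; split; [|split].
    - exists one; split; [now apply subgroup1|apply group_hom1].
    - intros x y [a [ha <-]] [b [hb <-]]. exists (a ** b); split; [now apply subgroupM|auto].
    - intros x [a [ha <-]]. exists a^-1; split; [now apply subgroupV|apply group_homV]. }
  destruct k; simpl; auto. intros [hK hn]; split; auto.
  intros q x [a [ha <-]]. exists ((lift q)^-1 ** (a ** lift q)); split; [now apply hn|].
  push_hom. now rewrite liftK.
Qed.

Lemma image_pi K g : subgroup G K -> (forall x, T x -> K x) -> image K (pi g) <-> K g.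
Proof.
  intros hK hTK; split; [|now exists g].
  intros [a [ha hag]]. replace g with (a ** (a^-1 ** g)) by now gsimpl.
  apply subgroupM; auto. apply hTK, hker. push_hom. rewrite hag. now gsimpl.
Qed.

Lemma image_inj K1 K2 :
  subgroup G K1 -> (forall x, T x -> K1 x) -> subgroup G K2 -> (forall x, T x -> K2 x) ->
  image K1 = image K2 -> K1 = K2.
Proof.
  intros h1 hT1 h2 hT2 heq. apply pred_ext; intro g.
  now rewrite <- (image_pi K1), <- (image_pi K2), heq.
Qed.

Lemma preimage_inj L1 L2 : preimage L1 = preimage L2 -> L1 = L2.
Proof.
  intro heq. apply pred_ext; intro q. rewrite <- (liftK q).
  change (preimage L1 (lift q) <-> preimage L2 (lift q)). now rewrite heq.
Qed.

Lemma has_index_preimage L n : subgroup Q L -> has_index Q L n -> has_index G (preimage L) n.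
Proof.
  intros hL hidx. assert (hL' : subgroup G (preimage L)) by now apply (preimage_kind Sub).
  apply has_index_rel_index in hidx as [R [[hnd _ hcov hsep] <-]]; auto.
  apply has_index_rel_index; auto. exists (map lift R); split; [|apply length_map].
  split; [| easy | |].
  - apply NoDup_map_NoDup_ForallPairs; auto. intros a b _ _ hab.
    now rewrite <- (liftK a), <- (liftK b), hab.
  - intros x _. destruct (hcov (pi x) I) as [a [ha hx]].
    exists (lift a); split; [now apply in_map|]. unfold preimage. push_hom. now rewrite liftK.
  - intros a b ha hb hab. apply in_map_iff in ha as [a' [<- ha]], hb as [b' [<- hb]].
    f_equal. apply hsep; auto. unfold preimage in hab. now rewrite hpi, group_homV, !liftK in hab.
Qed.

Lemma has_index_image K n : subgroup G K -> (forall x, T x -> K x) ->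
  has_index G K n -> has_index Q (image K) n.
Proof.
  intros hK hTK hidx. assert (hK' : subgroup Q (image K)) by now apply (image_kind Sub).
  apply has_index_rel_index in hidx as [R [[hnd _ hcov hsep] <-]]; auto.
  apply has_index_rel_index; auto. exists (map pi R); split; [|apply length_map].
  split; [| easy | |].
  - apply NoDup_map_NoDup_ForallPairs; auto. intros a b ha hb hab. apply hsep; auto.
    apply image_pi; auto. push_hom. rewrite hab. gsimpl. now apply subgroup1.
  - intros q _. rewrite <- (liftK q). destruct (hcov (lift q) I) as [a [ha hx]].
    exists (pi a); split; [now apply in_map|]. rewrite <- group_homV, <- hpi. now apply image_pi.
  - intros a b ha hb hab. apply in_map_iff in ha as [a' [<- ha]], hb as [b' [<- hb]].
    f_equal. apply hsep; auto. apply image_pi; auto. now push_hom.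
Qed.

End Correspondence.

Section NormalProduct.
Variables (G : group) (T : G -> Prop).
Hypothesis hT : normal_subgroup G T.
Implicit Types (H : G -> Prop).

Let hTsub : subgroup G T := proj1 hT.

Definition normal_prod H : G -> Prop := fun x => exists t, T t /\ H (t^-1 ** x).

Lemma normal_prod_subgroup H : subgroup G H -> subgroup G (normal_prod H).
Proof.
  intro hH. pose proof (proj2 hT) as hTn. unfold normal_prod; split; [|split].
  - exists one; split; [now apply subgroup1|]. gsimpl; now apply subgroup1.
  (* With [x = t1 h1] and [y = t2 h2]: [x y = t1 (h1 t2 h1^-1) (h1 h2)]
     and [x^-1 = (h1^-1 t1^-1 h1) h1^-1]. *)
  - intros x y [t1 [ht1 hx]] [t2 [ht2 hy]]. set (h1 := t1^-1 ** x).
    exists (t1 ** (h1^-1^-1 ** (t2 ** h1^-1))); split.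
    + apply subgroupM; auto.
    + replace (_ ^-1 ** (x ** y)) with (h1 ** (t2^-1 ** y)) by (unfold h1; now gsimpl).
      now apply subgroupM.
  - intros x [t1 [ht1 hx]]. set (h1 := t1^-1 ** x).
    exists (h1^-1 ** (t1^-1 ** h1)); split.
    + apply hTn. now apply subgroupV.
    + replace (_ ^-1 ** x^-1) with h1^-1 by (unfold h1; now gsimpl). now apply subgroupV.
Qed.

Lemma normal_prod_kind k H : subgroup_kind k G H -> subgroup_kind k G (normal_prod H).
Proof.
  destruct k; simpl; [apply normal_prod_subgroup|]. intros [hH hHn].
  split; [now apply normal_prod_subgroup|].
  intros g x [t [ht hx]]. exists (g^-1 ** (t ** g)); split; [now apply (proj2 hT)|].
  replace (_ ^-1 ** (g^-1 ** (x ** g))) with (g^-1 ** ((t^-1 ** x) ** g)) by now gsimpl.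
  now apply hHn.
Qed.

Lemma normal_prod_subr H x : subgroup G H -> H x -> normal_prod H x.
Proof. intros hH hx. exists one; split; [now apply subgroup1|now gsimpl]. Qed.

Lemma normal_prod_subl H x : subgroup G H -> T x -> normal_prod H x.
Proof. intros hH hx. exists x; split; auto. gsimpl; now apply subgroup1. Qed.

Lemma has_index_normal_prod H n : subgroup G H -> has_index G H n ->
  exists m, (1 <= m <= n)%nat /\ has_index G (normal_prod H) m.
Proof.
  intros hH hidx. apply has_index_rel_index in hidx as [R [[_ _ hcov _] <-]]; auto.
  destruct (rel_index_of_covers G (fun _ => True) (normal_prod H) R) as [m [hm hidx]]; auto.
  - now apply normal_prod_subgroup.
  - intros x _. destruct (hcov x I) as [a [ha hx]]. exists a; split; auto.
    now apply normal_prod_subr.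
  - exists m; split; [|apply has_index_rel_index; auto using normal_prod_subgroup].
    split; auto. destruct hidx as [[|a R'] [[_ _ hcov' _] <-]]; simpl; [|lia].
    now destruct (hcov' one I) as [? [[] _]].
Qed.

(* [T] supplies a common transversal of [H] in [TH] and of [T ∩ H] in [T]. *)
Lemma normal_prod_rel_index H t : subgroup G H -> has_card T t ->
  exists m, rel_index G (normal_prod H) H m /\ rel_index G T (fun x => T x /\ H x) m.
Proof.
  intros hH [Tl [_ [_ hTl]]].
  destruct (transversal_of_covers G (normal_prod H) H Tl) as [U [hU hUT]]; auto.
  - intros x [s [hs hx]]. exists s; split; [now apply hTl|auto].
  - intros a ha. now apply normal_prod_subl, hTl.
  - exists (length U); split; [now exists U|]. exists U; split; [|easy].
    destruct hU as [hnd hsub hcov hsep].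
    assert (hUT' : forall a, In a U -> T a) by (intros a ha; now apply hTl, hUT).
    split; auto.
    + intros x hx. destruct (hcov x (normal_prod_subl H x hH hx)) as [a [ha hax]].
      exists a; split; auto. split; auto. apply subgroupM; auto. now apply subgroupV, hUT'.
    + intros a b ha hb [_ hab]. now apply hsep.
Qed.

Theorem normal_sub_of_coprime_index H n t : subgroup G H -> has_index G H n -> has_card T t ->
  (forall d, Nat.divide d n -> Nat.divide d t -> d = 1%nat) -> forall x, T x -> H x.
Proof.
  intros hH hidx hcard hcop.
  set (TH := normal_prod H). assert (hTH : subgroup G TH) by now apply normal_prod_subgroup.
  set (TiH := fun x => T x /\ H x). assert (hTiH : subgroup G TiH) by now apply subgroupI.
  destruct (normal_prod_rel_index H t hH hcard) as [m [hm_up hm_down]]. 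
  destruct (has_index_normal_prod H n hH hidx) as [a [_ ha]].
  destruct (has_card_subset TiH T t hcard) as [b hb]; [now intros x []|].
  assert (hn : n = (a * m)%nat).
  { apply (rel_index_unique G (fun _ => True) H); auto.
    - now apply has_index_rel_index.
    - apply (rel_index_mul G _ TH); auto using subgroupT.
      + intro x; now apply normal_prod_subr.
      + now apply has_index_rel_index. }
  assert (ht : t = (m * b)%nat).
  { apply (rel_index_unique G T (fun x => x = one)); auto using subgroup_trivial.
    - now apply rel_index_trivial.
    - apply (rel_index_mul G _ TiH); auto using subgroup_trivial.
      + intros x ->. now apply (subgroup1 G TiH).
      + now intros x [].
      + now apply rel_index_trivial. }
  assert (m = 1%nat) as -> by (apply hcop; [exists a|exists b]; lia).
  intros x hx. apply (rel_index1_incl G TH); auto. now apply normal_prod_subl.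
Qed.

End NormalProduct.

Definition subgroups_of_index (k : kind) (X : group) (n : nat) (H : X -> Prop) : Prop :=
  subgroup_kind k X H /\ has_index X H n.

Lemma has_card_partial_count k (X : group) N :
  (forall n, has_card (subgroups_of_index k X n) (a_count k X n)) ->
  has_card (fun H => exists n, In n (seq 1 N) /\ subgroups_of_index k X n H)
           (partial_count k X N).
Proof.
  intro hcard. apply has_card_disjoint_union; auto using seq_NoDup.
  intros m n H _ _ [hk hm] [_ hn].
  apply (has_index_unique X H); auto. now apply (subgroup_kind_subgroup X k).
Qed.

Lemma subgroups_of_index_at_most (G : group) r k n :
  (forall H, subgroup G H -> finitely_generated G H ->
     exists l, (length l <= r)%nat /\ gen_by_list G H l) ->
  at_most (subgroups_of_index k G n) (2 ^ (S r * (S n * S n))).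
Proof.
  intro hrank.
  apply (at_most_inj _ (fun H => exists R, covered_by G (fun _ => True) H R n) (fun H => H)).
  - apply (covered_subgroups_at_most G r hrank (fun _ => True) (subgroupT G) n).
  - intros H [hk hidx]. apply (subgroup_kind_subgroup G k) in hk.
    apply has_index_rel_index in hidx as [R [[_ _ hcov _] hlen]]; auto.
    exists R. split; [exact hk|]. split; [easy|]. split; [exact hcov|easy].
  - easy.
Qed.

Section Quotient.
Variables (G Q : group) (pi : G -> Q) (T : G -> Prop).
Hypotheses (hT : normal_subgroup G T) (hpi : group_hom G Q pi)
  (hsurj : forall q, exists g, pi g = q) (hker : forall g, pi g = one <-> T g).
Variable r : nat.
Hypothesis hrank : forall H, subgroup G H -> finitely_generated G H ->
  exists l, (length l <= r)%nat /\ gen_by_list G H l.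
Variable t : nat.
Hypothesis hTcard : has_card T t.

Lemma preimage_subgroups_of_index k n L :
  subgroups_of_index k Q n L -> subgroups_of_index k G n (preimage G Q pi L).
Proof.
  intros [hk hidx]. split; [now apply preimage_kind|].
  apply has_index_preimage; auto. now apply (subgroup_kind_subgroup Q k).
Qed.

Lemma image_subgroups_of_index k n H : (forall x, T x -> H x) ->
  subgroups_of_index k G n H -> subgroups_of_index k Q n (image G Q pi H).
Proof.
  intros hTH [hk hidx]. split; [now apply image_kind|].
  apply (has_index_image G Q pi T); auto. now apply (subgroup_kind_subgroup G k).
Qed.

Lemma has_card_a_count_G k n : has_card (subgroups_of_index k G n) (a_count k G n).
Proof.
  destruct (at_most_has_card _ _ (subgroups_of_index_at_most G r k n hrank)) as [m hm].
  unfold a_count. now rewrite (card_of_has_card _ m).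
Qed.

Lemma has_card_a_count_Q k n : has_card (subgroups_of_index k Q n) (a_count k Q n).
Proof.
  assert (hbound : at_most (subgroups_of_index k Q n) (2 ^ (S r * (S n * S n)))).
  { apply (at_most_inj _ (subgroups_of_index k G n) (preimage G Q pi)).
    - now apply subgroups_of_index_at_most.
    - apply preimage_subgroups_of_index.
    - intros; now apply (preimage_inj G Q pi). }
  destruct (at_most_has_card _ _ hbound) as [m hm].
  unfold a_count. now rewrite (card_of_has_card _ m).
Qed.

Lemma partial_count_quotient_le k N : (partial_count k Q N <= partial_count k G N)%nat.
Proof.
  apply (has_card_le_inj _ _ (preimage G Q pi) _ _
           (has_card_partial_count k Q N (has_card_a_count_Q k))
           (has_card_partial_count k G N (has_card_a_count_G k))).
  - intros L [n [hn hL]]. exists n; split; auto. now apply preimage_subgroups_of_index.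
  - intros; now apply (preimage_inj G Q pi).
Qed.

Definition fibre_bound : nat := 2 ^ (S r * (S t * S t)).

Lemma normal_prod_fibre_at_most K : subgroup G K ->
  at_most (fun H => subgroup G H /\ normal_prod G T H = K) fibre_bound.
Proof.
  intro hK. destruct hTcard as [Tl [_ [hlen hTl]]].
  apply (at_most_inj _ (fun H => exists R, covered_by G K H R t) (fun H => H)).
  - now apply (covered_subgroups_at_most G r hrank K hK t).
  - intros H [hH <-]. exists Tl. split; [exact hH|]. split; [|split; [|split]].
    + intro x; now apply normal_prod_subr.
    + intros x [s [hs hx]]. exists s; split; [now apply hTl|exact hx].
    + intros a ha. now apply normal_prod_subl, hTl.
    + exact hlen.
  - easy.
Qed.

Lemma partial_count_le_quotient k N :
  (partial_count k G N <= fibre_bound * partial_count k Q N)%nat.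
Proof.
  destruct (has_card_partial_count k G N (has_card_a_count_G k)) as [LG [hndG [<- hLG]]].
  destruct (has_card_partial_count k Q N (has_card_a_count_Q k)) as [LQ [_ [<- hLQ]]].
  assert (hsub : forall H, In H LG -> subgroup G H).
  { intros H hH. apply hLG in hH as [n [_ [hk _]]]. now apply (subgroup_kind_subgroup G k). }
  apply (length_le_fibers (fun H => image G Q pi (normal_prod G T H))); auto.
  - intros H hH. pose proof (hsub H hH) as hHsub. apply hLG in hH as [n [hn [hk hidx]]].
    destruct (has_index_normal_prod G T hT H n hHsub hidx) as [m [hm hidx']].
    apply hLQ. exists m; split; [apply in_seq in hn; apply in_seq; lia|].
    apply image_subgroups_of_index; [now intro; apply normal_prod_subl|].
    split; [now apply normal_prod_kind|exact hidx'].
  - intros y [|H0 l] hnd hl; [simpl; lia|].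
    assert (hH0 : subgroup G H0) by (apply hsub, hl; now left).
    apply (normal_prod_fibre_at_most (normal_prod G T H0)); auto.
    { now apply normal_prod_subgroup. }
    intros H hH. destruct (hl H hH) as [hHG hHy]. pose proof (hsub H hHG) as hHsub.
    split; auto. apply (image_inj G Q pi T); auto using normal_prod_subgroup.
    + intro; now apply normal_prod_subl.
    + intro; now apply normal_prod_subl.
    + destruct (hl H0 (or_introl eq_refl)) as [_ hH0y]. congruence.
Qed.

Lemma a_count_coprime_eq k n : (forall d, Nat.divide d n -> Nat.divide d t -> d = 1%nat) ->
  a_count k G n = a_count k Q n.
Proof.
  intro hcop.
  assert (hTH : forall H, subgroups_of_index k G n H -> forall x, T x -> H x).
  { intros H [hk hidx]. apply (normal_sub_of_coprime_index G T hT H n t); auto.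
    now apply (subgroup_kind_subgroup G k). }
  apply Nat.le_antisymm.
  - apply (has_card_le_inj _ _ (image G Q pi) _ _ (has_card_a_count_G k n) (has_card_a_count_Q k n)).
    + intros H hH. now apply image_subgroups_of_index; [apply hTH|].
    + intros H1 H2 h1 h2 heq. apply (image_inj G Q pi T hpi hker); auto.
      * destruct h1 as [hk _]. now apply (subgroup_kind_subgroup G k).
      * now apply hTH.
      * destruct h2 as [hk _]. now apply (subgroup_kind_subgroup G k).
      * now apply hTH.
  - apply (has_card_le_inj _ _ (preimage G Q pi) _ _ (has_card_a_count_Q k n) (has_card_a_count_G k n)).
    + apply preimage_subgroups_of_index.
    + intros; now apply (preimage_inj G Q pi).
Qed.

End Quotient.

Lemma alpha_eq_of_partial_count_bounds k (G Q : group) (B : nat) : (0 < B)%nat ->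
  (forall N, partial_count k Q N <= partial_count k G N)%nat ->
  (forall N, partial_count k G N <= B * partial_count k Q N)%nat ->
  alpha k G = alpha k Q.
Proof.
  intros hB hQG hGQ. unfold alpha. f_equal. apply pred_ext; intro a.
  split; intros [c [hc hbound]].
  - exists c; split; auto. intros n hn.
    apply Rle_trans with (INR (partial_count k G n)); [apply le_INR, hQG|auto].
  - exists (INR B * c)%R; split; [apply Rmult_lt_0_compat; auto; now apply lt_0_INR|].
    intros n hn. apply Rle_trans with (INR (B * partial_count k Q n)); [apply le_INR, hGQ|].
    rewrite mult_INR, Rmult_assoc. apply Rmult_le_compat_l; [apply pos_INR|auto].
Qed.

Theorem lemma5p2 (G : group) (T : G -> Prop) (Q : group) (pi : G -> Q)
  (hrank : finite_rank G)
  (hT : normal_subgroup G T)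
  (hTfin : exists m, has_card T m)
  (hpi : group_hom G Q pi)
  (hsurj : forall q : Q, exists g : G, pi g = q)
  (hker : forall g : G, pi g = gone Q <-> T g) :
  (forall k : kind, alpha k G = alpha k Q) /\
  (forall (p : nat), prime (Z.of_nat p) ->
     (forall m, has_card T m -> ~ Nat.divide p m) ->
     forall k : kind, local_zeta k G p = local_zeta k Q p).
Proof.
  destruct hrank as [r hr], hTfin as [t ht]. split.
  - intro k. apply (alpha_eq_of_partial_count_bounds k G Q (fibre_bound r t)).
    + apply Nat.neq_0_lt_0, Nat.pow_nonzero; lia.
    + exact (partial_count_quotient_le G Q pi hpi hsurj r hr k).
    + exact (partial_count_le_quotient G Q pi T hT hpi hsurj hker r hr t ht k).
  - intros p hp hpt k. apply functional_extensionality; intro e.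
    apply (a_count_coprime_eq G Q pi T hT hpi hsurj hker r hr t ht).
    intros d hd hdt. apply (prime_power_coprime p t d e); auto.
Qed.
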